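(* Let $E,A\in\mathbb{R}^{n\times n}$ with $A$ nonsingular and let $\mathcal{C}=\mathcal{C}(E,A)$ be the consistency space of $(E,A)$. A symmetric matrix $P\in\mathbb{R}^{n\times n}$ is a Lyapunov matrix for $(E,A)$ if and only if $x^TPx>0$ for all nonzero $x\in\mathcal{C}$ and $x^T\big(PA^{-1}E+E^TA^{-T}P\big)x<0$ for all nonzero $x\in\mathcal{C}$.
   Context: For $E,A\in\mathbb{R}^{n\times n}$ with $A$ nonsingular, $(E,A)$ denotes the linear descriptor system $E\dot x=Ax$. Its index is the smallest integer $k^*\ge 0$ with $\mathrm{Im}((A^{-1}E)^{k^*+1})=\mathrm{Im}((A^{-1}E)^{k^*})$, and its consistency space is $\mathcal{C}(E,A)=\mathrm{Im}((A^{-1}E)^{k^*})$ (the set of initial states from which the system has a continuous solution). If $\mathcal{C}\neq\{0\}$, the map $A^{-1}E$ maps $\mathcal{C}$ bijectively onto itself; letting $\tilde A$ be the inverse of its restriction to $\mathcal{C}$, the system restricted to $\mathcal{C}$ is equivalent to $\dot x=\tilde Ax$, $x\in\mathcal{C}$. A symmetric matrix $P$ is a Lyapunov matrix for $(E,A)$ if the function $V(x)=x^TPx$ is positive on $\mathcal{C}\setminus\{0\}$ and its derivative along solutions, $\dot V=2x^TP\dot x$ with $\dot x=\tilde A x$, is negative at every nonzero state $x\in\mathcal{C}$. *)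

From HB Require Import structures.
From mathcomp Require Import all_boot all_order all_algebra.
Set Implicit Arguments. Unset Strict Implicit. Unset Printing Implicit Defensive.
Import Order.TTheory GRing.Theory Num.Theory.
Local Open Scope ring_scope.

Definition in_image (R : fieldType) (n : nat) (B : 'M[R]_n) (x : 'cV[R]_n) : Prop :=
  exists y : 'cV[R]_n, x = B *m y.

Definition AinvE (R : fieldType) (n : nat) (E A : 'M[R]_n) : 'M[R]_n := invmx A *m E.

(* Im(M^(k+1)) = Im(M^k), as equality of column spaces (= row spaces of transposes). *)
Definition img_stable (R : fieldType) (n : nat) (M : 'M[R]_n) (k : nat) : bool :=
  (((M ^+ k.+1)^T) == ((M ^+ k)^T))%MS.

(* Index: smallest k >= 0 with Im(M^(k+1)) = Im(M^k).  Such k always exists and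
   is <= n (ranks of M^k are nonincreasing), so searching 0..n finds the minimum. *)
Definition dae_index (R : fieldType) (n : nat) (E A : 'M[R]_n) : nat :=
  find (img_stable (AinvE E A)) (iota 0 n.+1).

Definition consistency_space (R : fieldType) (n : nat) (E A : 'M[R]_n) (x : 'cV[R]_n) : Prop :=
  in_image ((AinvE E A) ^+ (dae_index E A)) x.

Definition qf (R : fieldType) (n : nat) (x : 'cV[R]_n) (Q : 'M[R]_n) (y : 'cV[R]_n) : R :=
  (x^T *m Q *m y) 0 0.

(* Lyapunov matrix: V(x) = x^T P x positive on C\{0}, and
   dV/dt = 2 x^T P (Atilde x) < 0 for nonzero x in C, where Atilde x is the
   (unique, by bijectivity of A^{-1}E on C) vector xd in C with A^{-1}E xd = x. *)
Definition lyapunov_matrix (R : realFieldType) (n : nat) (E A P : 'M[R]_n) : Prop :=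
  P^T = P /\
  (forall x : 'cV[R]_n, consistency_space E A x -> x != 0 -> 0 < qf x P x) /\
  (forall x xd : 'cV[R]_n, consistency_space E A x -> x != 0 ->
     consistency_space E A xd -> AinvE E A *m xd = x ->
     2 * qf x P xd < 0).

From HB Require Import structures.
From mathcomp Require Import all_boot all_order all_algebra.
Set Implicit Arguments. Unset Strict Implicit. Unset Printing Implicit Defensive.
Import Order.TTheory GRing.Theory Num.Theory.
Local Open Scope ring_scope.

(* With M = A^-1 E and k the index, Im(M^(k+1)) = Im(M^k) forces M to map
   C = Im(M^k) into itself injectively (the kernels of M^k and M^(k+1) have
   equal dimension).  So the pairs (x, xd) of the Lyapunov condition are
   exactly (M xd, xd) with xd in C \ {0}, and along them
   dV/dt = 2 x^T P xd = 2 xd^T P M xd = xd^T (P M + M^T P) xd. *)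

Section ImageStabilization.
Variables (F : fieldType) (n : nat) (M : 'M[F]_n).

Lemma img_powS_sub k : (((M ^+ k.+1)^T) <= ((M ^+ k)^T))%MS.
Proof. by rewrite exprSr -mulmxE trmx_mul submxMl. Qed.

(* Each unstable step loses at least one dimension of the image. *)
Lemma rank_img_pow_unstable k :
  (forall i, (i < k)%N -> ~~ img_stable M i) -> (\rank ((M ^+ k)^T) + k <= n)%N.
Proof.
elim: k => [|k IHk] unstable; first by rewrite addn0 rank_leq_row.
have [le_rk eq_rk] := mxrank_leqif_eq (img_powS_sub k).
have lt_rk : (\rank ((M ^+ k.+1)^T) < \rank ((M ^+ k)^T))%N.
  by rewrite ltn_neqAle le_rk andbT eq_rk; apply: unstable.
rewrite addnS; apply: leq_trans (IHk (fun i lt_ik => unstable i (ltnW lt_ik))).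
by rewrite ltn_add2r.
Qed.

Lemma has_img_stable : has (img_stable M) (iota 0 n.+1).
Proof.
apply/negPn/negP => /hasPn unstable.
have : (\rank ((M ^+ n.+1)^T) + n.+1 <= n)%N.
  by apply: rank_img_pow_unstable => i lt_in; apply: unstable; rewrite mem_iota.
by rewrite addnS ltnNge leq_addl.
Qed.

Lemma img_stable_find : img_stable M (find (img_stable M) (iota 0 n.+1)).
Proof.
have := nth_find 0%N has_img_stable.
rewrite nth_iota ?add0n //.
by move: has_img_stable; rewrite has_find size_iota.
Qed.

Lemma img_stable_mulmx_inj k (z : 'cV[F]_n) : img_stable M k ->
  M *m (M ^+ k *m z) = 0 -> M ^+ k *m z = 0.
Proof.
move=> stable Mz0.
have sub_ker : (kermx ((M ^+ k)^T) <= kermx ((M ^+ k.+1)^T))%MS.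
  by apply/sub_kermxP; rewrite exprS -mulmxE trmx_mul mulmxA mulmx_ker mul0mx.
have eq_ker : (kermx ((M ^+ k)^T) == kermx ((M ^+ k.+1)^T))%MS.
  have [_ <-] := mxrank_leqif_eq sub_ker.
  by rewrite eqn_leq mxrankS //= !mxrank_ker (eqmx_rank stable).
have : (z^T <= kermx ((M ^+ k)^T))%MS.
  apply: submx_trans (proj2 (andP eq_ker)).
  by apply/sub_kermxP; rewrite -trmx_mul exprS -mulmxE -mulmxA Mz0 trmx0.
by move/sub_kermxP; rewrite -trmx_mul -trmx0 => /trmx_inj.
Qed.

End ImageStabilization.

Section ConsistencySpace.
Variables (F : fieldType) (n : nat) (E A : 'M[F]_n).
Local Notation M := (AinvE E A).
Local Notation C := (consistency_space E A).

Lemma consistency_space_mulmx x : C x -> C (M *m x).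
Proof.
case=> w ->; exists (M *m w).
by rewrite mulmxA [RHS]mulmxA; congr (_ *m w); rewrite mulmxE -exprS exprSr.
Qed.

Lemma consistency_space_mulmx_eq0 x : C x -> M *m x = 0 -> x = 0.
Proof. by case=> w ->; apply: img_stable_mulmx_inj; apply: img_stable_find. Qed.

End ConsistencySpace.

Lemma qf_sym (R : fieldType) (n : nat) (P : 'M[R]_n) (u v : 'cV[R]_n) :
  P^T = P -> qf u P v = qf v P u.
Proof.
move=> symP; rewrite /qf.
have -> : (u^T *m P *m v) 0 0 = (u^T *m P *m v)^T 0 0 by rewrite [RHS]mxE.
by rewrite !trmx_mul trmxK symP mulmxA.
Qed.

Lemma qf_lyapunov_sum (R : fieldType) (n : nat) (P M : 'M[R]_n) (x : 'cV[R]_n) :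
  P^T = P -> qf x (P *m M + M^T *m P) x = 2 * qf x P (M *m x).
Proof.
move=> symP; rewrite /qf mulmxDr mulmxDl mxE.
have -> : x^T *m (M^T *m P) *m x = (M *m x)^T *m P *m x by rewrite trmx_mul !mulmxA.
by rewrite -/(qf (M *m x) P x) qf_sym // /qf !mulmxA mulr2n mulrDl mul1r.
Qed.

Theorem lemma1 (R : realFieldType) (n : nat) (E A P : 'M[R]_n)
  (hA : A \in unitmx) (hP : P^T = P) :
  lyapunov_matrix E A P <->
  ((forall x : 'cV[R]_n, consistency_space E A x -> x != 0 -> 0 < qf x P x) /\
   (forall x : 'cV[R]_n, consistency_space E A x -> x != 0 ->
      qf x (P *m invmx A *m E + E^T *m (invmx A)^T *m P) x < 0)).
Proof.
have -> : P *m invmx A *m E + E^T *m (invmx A)^T *m P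
          = P *m AinvE E A + (AinvE E A)^T *m P by rewrite /AinvE trmx_mul mulmxA.
split.
- case=> _ [pos neg]; split => // xd Cxd xd0.
  rewrite qf_lyapunov_sum // qf_sym //.
  apply: neg => //; first exact: consistency_space_mulmx.
  by apply: contra xd0 => /eqP /(consistency_space_mulmx_eq0 Cxd) ->.
- case=> pos neg; split=> //; split=> // x xd _ x0 Cxd xdx; subst x.
  have xd0 : xd != 0 by apply: contra x0 => /eqP ->; rewrite mulmx0.
  by rewrite qf_sym // -qf_lyapunov_sum //; apply: neg.
Qed.
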